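(* Let $\alpha>0$ be the fraction of perfect labelers. There is an absolute constant $C$ such that the following holds. For a finite unlabeled sample set $S\subseteq\mathcal{X}$ and $\delta>0$, consider the procedure $\textsc{Prune-and-Label}(S,\delta)$: for each $x\in S$, draw a set $L$ of $k=\lceil C\alpha^{-2}\log(|S|/\delta)\rceil$ labelers independently from $P$; if $\mathrm{Maj\text{-}size}_L(x)\le1-\frac\alpha4$, make a golden query $y^*=f^*(x)$ and prune the labelers (replace $P$ by $P$ conditioned on labelers $i$ with $\ell_i(x)=y^*$), stopping the procedure; otherwise add $(x,\mathrm{Maj}_L(x))$ to the output $\bar S$. Then with probability at least $1-\delta$, either the procedure prunes the set of labelers, or its output $\bar S$ satisfies $y=f^*(x)$ for all $(x,y)\in\bar S$.
   Context: There is an unknown target $f^*:\mathcal{X}\to\{+1,-1\}$. Labeler $i$ is a function $\ell_i:\mathcal{X}\to\{+1,-1\}$, perfect if $\ell_i$ agrees with $f^*$; non-perfect labelers are arbitrary fixed functions. $P$ is the uniform distribution over labelers and $\alpha$ is the $P$-probability that a labeler is perfect. For a set $L$ of labelers, $\mathrm{Maj}_L(x)$ is the label given to $x$ by the majority of labelers in $L$, and $\mathrm{Maj\text{-}size}_L(x)$ is the fraction of labelers in $L$ whose label on $x$ equals $\mathrm{Maj}_L(x)$. A golden query on $x$ returns $f^*(x)$. *)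

From HB Require Import structures.
From mathcomp Require Import all_boot all_order all_algebra.
From mathcomp Require Import boolp reals exp.
Set Implicit Arguments. Unset Strict Implicit. Unset Printing Implicit Defensive.
Import Order.TTheory GRing.Theory Num.Theory.
Local Open Scope ring_scope.

Section PruneAndLabel.
Variables (R : realType) (X : eqType) (n : nat).
(* labelers are indexed by 'I_n; labels +1/-1 are encoded as true/false *)
Variables (lab : 'I_n -> X -> bool) (fstar : X -> bool).

Definition perfect (i : 'I_n) : bool := `[< forall x, lab i x = fstar x >].

(* alpha = P-probability (P uniform on 'I_n) that a labeler is perfect *)
Definition alpha : R := #|[set i | perfect i]|%:R / n%:R.

(* Maj_L(x) for a multiset (tuple) L of labelers; ties -> +1 (irrelevant:
   a tie gives Maj-size 1/2 <= 1 - alpha/4, hence a prune). *)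
Definition maj (L : seq 'I_n) (x : X) : bool :=
  (count (fun i => ~~ lab i x) L <= count (fun i => lab i x) L)%N.

Definition maj_size (L : seq 'I_n) (x : X) : R :=
  (count (fun i => lab i x == maj L x) L)%:R / (size L)%:R.

Inductive outcome := Pruned | Output of seq (X * bool).

(* Run of Prune-and-Label on S, the k labelers drawn for the j-th point
   being given with it.  Pruning stops the procedure. *)
Fixpoint pal_run (a : R) (xs : seq (X * seq 'I_n)) : outcome :=
  match xs with
  | [::] => Output [::]
  | (x, L) :: t =>
      if maj_size L x <= 1 - a / 4 then Pruned
      else match pal_run a t with
           | Pruned => Pruned
           | Output o => Output ((x, maj L x) :: o)
           end
  end.

Definition pal_good (o : outcome) : bool :=
  match o with
  | Pruned => true
  | Output o => all (fun p => p.2 == fstar p.1) o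
  end.

(* All draws are made up front: omega assigns to the j-th point of S an
   independent uniform k-tuple of labelers (before a prune P is unchanged,
   i.e. uniform; draws after a prune are never used). *)
Definition pal_outcome (a : R) (S : seq X) (k : nat)
    (omega : (size S).-tuple (k.-tuple 'I_n)) : outcome :=
  pal_run a (zip S (map (fun L : k.-tuple 'I_n => val L) omega)).

Definition success_prob (S : seq X) (k : nat) : R :=
  #|[set omega : (size S).-tuple (k.-tuple 'I_n) |
      pal_good (pal_outcome alpha omega)]|%:R
  / #|{: (size S).-tuple (k.-tuple 'I_n)}|%:R.

End PruneAndLabel.

(* ceiling of a real, as a natural number (0 if the ceiling is negative) *)
Definition ceiln {R : realType} (x : R) : nat := absz (Num.max 0%R (Num.ceil x)).

From HB Require Import structures.
From mathcomp Require Import all_boot all_order all_algebra.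
From mathcomp Require Import boolp reals exp sequences.
From mathcomp Require Import lra.
Import Order.TTheory GRing.Theory Num.Theory.

(* A draw of labelers is bad only if at some point x of S the majority is confident
   (Maj-size > 1 - alpha/4) and wrong, so that fewer than k alpha/4 of the k drawn
   labelers agree with f* at x.  At least an alpha fraction of all labelers agree with
   f* at x, so giving weight e^-1 to each agreeing labeler (an exponential moment) shows
   that at most a fraction exp(-k alpha/4) of the k-tuples are that bad.  A union bound
   over the |S| points, with k >= 4 alpha^-2 ln(|S|/delta), bounds the failure
   probability by delta. *)

Set Implicit Arguments.
Unset Strict Implicit.
Unset Printing Implicit Defensive.
Local Open Scope ring_scope.

Section TupleSums.
Variable T : finType.

Lemma sum_tuple_prod (R : comPzSemiRingType) s (f : 'I_s -> T -> R) :
  \sum_(t : s.-tuple T) \prod_(i < s) f i (tnth t i) = \prod_(i < s) \sum_x f i x.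
Proof.
rewrite bigA_distr_bigA /= (reindex (fun t : s.-tuple T => [ffun i => tnth t i])) /=.
  by apply: eq_bigr => t _; apply: eq_bigr => i _; rewrite ffunE.
exists (fun g : {ffun 'I_s -> T} => [tuple g i | i < s]) => [t _|g _].
  by apply: eq_from_tnth => i; rewrite tnth_mktuple ffunE.
by apply/ffunP => i; rewrite ffunE tnth_mktuple.
Qed.

Lemma card_tuple_tnth s (j : 'I_s) (A : {pred T}) :
  #|[set t : s.-tuple T | tnth t j \in A]| = (#|T| ^ s.-1 * #|A|)%N.
Proof.
pose f (i : 'I_s) (x : T) : nat := if i == j then x \in A else true.
have -> : #|[set t : s.-tuple T | tnth t j \in A]| =
          \sum_(t : s.-tuple T) \prod_(i < s) f i (tnth t i).
  rewrite -sum1dep_card big_mkcond /=; apply: eq_bigr => t _.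
  rewrite (bigD1 j) //= big1 => [|i ji]; last by rewrite /f (negPf ji).
  by rewrite /f eqxx mulr1; case: (_ \in A).
rewrite sum_tuple_prod (bigD1 j) //= mulnC /f eqxx; congr (_ * _)%N.
  by rewrite (eq_bigr (fun x => if x \in A then 1 else 0)%N) // -big_mkcond sumr_const natn.
rewrite (eq_bigr (fun _ => #|T|)) => [|i ji]; last by rewrite (negPf ji) sum1_card.
by rewrite prod_nat_const cardC1 card_ord.
Qed.
End TupleSums.

Lemma expRN1_le_half (R : realType) : expR (-1) <= 2^-1 :> R.
Proof.
rewrite expRN lef_pV2 ?posrE ?expR_gt0 //.
by apply: le_trans (expR_ge1Dx 1); rewrite addrC.
Qed.

Lemma natr_count (R : pzSemiRingType) (T : Type) (P : pred T) (s : seq T) :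
  (count P s)%:R = \sum_(x <- s) (P x)%:R :> R.
Proof.
elim: s => [|x s IH]; first by rewrite big_nil.
by rewrite big_cons /= natrD IH.
Qed.

Lemma natr_card_set (R : pzSemiRingType) (T : finType) (P : pred T) :
  #|[set x | P x]|%:R = \sum_x (P x)%:R :> R.
Proof.
by rewrite -sum1dep_card natr_sum big_mkcond; apply: eq_bigr => x _; case: (P x).
Qed.

Section LowCountTuples.
Variables (R : realType) (T : finType) (A : pred T) (a : R).
Hypotheses (a_ge0 : 0 <= a) (a_card : a * #|T|%:R <= #|A|%:R).

Lemma sum_expRN_mem_le : \sum_x expR (- (x \in A)%:R) <= #|T|%:R * expR (- (a / 2)).
Proof.
have -> : \sum_x expR (- (x \in A)%:R) = #|A|%:R * expR (-1) + (#|T|%:R - #|A|%:R) :> R.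
  rewrite (bigID (mem A)) /= (eq_bigr (fun=> expR (-1))) => [|x xA]; last by rewrite xA.
  rewrite [X in _ + X](eq_bigr (fun=> 1)) => [|x xA]; last by rewrite (negPf xA) oppr0 expR0.
  by rewrite !sumr_const -(cardC A) natrD addrAC subrr add0r mulr_natl.
apply: (@le_trans _ _ (#|T|%:R * (1 - a / 2))); last exact/ler_wpM2l/expR_ge1Dx.
have := ler_wpM2l (ler0n _ #|A|) (expRN1_le_half R).
move: a_card; lra.
Qed.

Lemma card_low_count k :
  #|[set t : k.-tuple T | (count A t)%:R < k%:R * a / 4]|%:R
    <= #|T|%:R ^+ k * expR (- (k%:R * a / 4)) :> R.
Proof.
set th := k%:R * a / 4.
have low_le (t : k.-tuple T) :
    ((count A t)%:R < th :> R)%:R <= expR th * \prod_(i < k) expR (- (tnth t i \in A)%:R).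
  have -> : \prod_(i < k) expR (- (tnth t i \in A)%:R) = expR (- (count A t)%:R) :> R.
    by rewrite -expR_sum sumrN -(big_tuple _ _ t predT (fun x => (x \in A)%:R))
               natr_count.
  rewrite -expRD.
  have [lt_th|_] := boolP (_ < th); last exact: expR_ge0.
  by apply: le_trans (expR_ge1Dx _); rewrite /=; lra.
rewrite (natr_card_set R); apply: le_trans (ler_sum _ (fun t _ => low_le t)) _.
rewrite -mulr_sumr (@sum_tuple_prod _ _ k (fun=> fun x => expR (- (x \in A)%:R))).
rewrite prodr_const card_ord.
have sum_ge0 : 0 <= \sum_x expR (- (x \in A)%:R) :> R.
  by apply: sumr_ge0 => x _; exact: expR_ge0.
apply: le_trans (ler_wpM2l (expR_ge0 th) (lerXn2r k _ _ sum_expRN_mem_le)) _.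
- by rewrite nnegrE.
- by rewrite nnegrE mulr_ge0 ?expR_ge0.
rewrite exprMn -expRM_natl mulrCA -expRD /th.
by apply: ler_wpM2l; [exact: exprn_ge0 | rewrite ler_expR; lra].
Qed.
End LowCountTuples.

Section PruneAndLabelRuns.
Variables (R : realType) (X : eqType) (n : nat).
Variables (lab : 'I_n -> X -> bool) (fstar : X -> bool).

Definition agrees (x : X) : pred 'I_n := fun i => lab i x == fstar x.

Lemma count_agrees_lt (a : R) (L : seq 'I_n) (x : X) :
  a <= 4 -> 1 - a / 4 < maj_size R lab L x -> maj lab L x != fstar x ->
  (count (agrees x) L)%:R < (size L)%:R * a / 4.
Proof.
move=> a_le4 confident wrong.
have count_split :
    (count (agrees x) L + count (fun i => lab i x == maj lab L x) L = size L)%N.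
  rewrite -(count_predC (fun i => lab i x == maj lab L x)) addnC; congr (_ + _)%N.
  apply: eq_count => i /=; move: wrong; rewrite /agrees.
  by case: (lab i x); case: (maj lab L x); case: (fstar x).
move: confident; rewrite /maj_size; case: (posnP (size L)) => [-> | L_gt0].
  by rewrite invr0 mulr0; lra.
rewrite ltr_pdivlMr ?ltr0n // -count_split natrD; lra.
Qed.

Lemma pal_run_wrong (a : R) xs :
  ~~ pal_good fstar (pal_run lab a xs) ->
  has (fun p => (1 - a / 4 < maj_size R lab p.2 p.1) && (maj lab p.2 p.1 != fstar p.1))
      xs.
Proof.
elim: xs => [|[x L] xs IH] //=; case: ifP => // unconfident.
case: (pal_run lab a xs) IH => [|o] //= IH.
rewrite negb_and ltNge unconfident /= => /orP [-> // | wrong_tail].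
by rewrite (IH wrong_tail) orbT.
Qed.

Lemma pal_outcome_wrong (a : R) (S : seq X) k
    (omega : (size S).-tuple (k.-tuple 'I_n)) :
  a <= 4 -> ~~ pal_good fstar (pal_outcome lab a omega) ->
  exists j, (count (agrees (tnth (in_tuple S) j)) (tnth omega j))%:R < k%:R * a / 4.
Proof.
move=> a_le4; have -> : pal_outcome lab a omega = pal_run lab a
    [seq (tnth (in_tuple S) j, val (tnth omega j)) | j <- enum 'I_(size S)].
  rewrite /pal_outcome -(zip_map (tnth (in_tuple S)) (val \o tnth omega)).
  by rewrite map_comp !map_tnth_enum.
move/pal_run_wrong; rewrite has_map => /hasP [j _ /andP /= [confident wrong]].
by exists j; have := count_agrees_lt a_le4 confident wrong; rewrite size_tuple.
Qed.

Lemma alpha_ge0 : 0 <= alpha R lab fstar.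
Proof. by rewrite divr_ge0. Qed.

Lemma alpha_le1 : alpha R lab fstar <= 1.
Proof.
rewrite /alpha; have [n0 | n_gt0] := posnP n.
  by rewrite (_ : n%:R = 0) ?n0 // invr0 mulr0 ler01.
by rewrite ler_pdivrMr ?ltr0n // mul1r ler_nat -[X in (_ <= X)%N]card_ord max_card.
Qed.

Lemma alpha_card_agrees x : alpha R lab fstar * #|'I_n|%:R <= #|agrees x|%:R.
Proof.
rewrite card_ord /alpha; have [n0 | n_gt0] := posnP n.
  by rewrite (_ : n%:R = 0) ?n0 // mulr0.
rewrite mulfVK ?pnatr_eq0 -?lt0n // ler_nat; apply: subset_leq_card; apply/subsetP => i.
by rewrite inE => /asboolP perfect_i; rewrite unfold_in /agrees perfect_i.
Qed.

Lemma card_wrong_draws (S : seq X) k :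
  #|~: [set omega : (size S).-tuple (k.-tuple 'I_n) |
        pal_good fstar (pal_outcome lab (alpha R lab fstar) omega)]|%:R
    <= (size S)%:R * #|{: (size S).-tuple (k.-tuple 'I_n)}|%:R
       * expR (- (k%:R * alpha R lab fstar / 4)).
Proof.
set a := alpha R lab fstar.
pose low_count j := [set L : k.-tuple 'I_n |
  (count (agrees (tnth (in_tuple S) j)) L)%:R < k%:R * a / 4].
pose low j := [set omega : (size S).-tuple (k.-tuple 'I_n) | tnth omega j \in low_count j].
have wrong_sub : ~: [set omega | pal_good fstar (pal_outcome lab a omega)]
                 \subset \bigcup_(j < size S) low j.
  apply/subsetP => omega; rewrite !inE => /(pal_outcome_wrong _) [|j low_j].
    by apply: le_trans alpha_le1 _; lra.
  by apply/bigcupP; exists j; rewrite ?inE.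
have card_low j :
    #|low j|%:R <= #|{: (size S).-tuple (k.-tuple 'I_n)}|%:R * expR (- (k%:R * a / 4)).
  have s_gt0 : (0 < size S)%N by apply: leq_ltn_trans (ltn_ord j).
  rewrite card_tuple_tnth natrM natrX [X in _ <= X%:R * _]card_tuple natrX.
  rewrite -[in X in _ <= X](prednK s_gt0) exprSr -mulrA ler_wpM2l ?exprn_ge0 //.
  by rewrite card_tuple natrX; apply: card_low_count; rewrite ?alpha_ge0 ?alpha_card_agrees.
apply: le_trans (_ : (\sum_(j < size S) #|low j|)%:R <= _).
  rewrite ler_nat; apply: leq_trans (subset_leq_card wrong_sub) _.
  apply: (big_ind2 (fun (B : {set _}) m => #|B| <= m)%N) => // [|B m B' m' ? ?].
    by rewrite cards0.
  by apply: leq_trans (leq_card_setU B B') (leq_add _ _).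
rewrite natr_sum -mulrA; apply: le_trans (ler_sum _ (fun j _ => card_low j)) _.
by rewrite sumr_const card_ord [X in _ <= X]mulr_natl.
Qed.

Lemma success_prob_ge (S : seq X) k : 0 < alpha R lab fstar ->
  1 - (size S)%:R * expR (- (k%:R * alpha R lab fstar / 4))
    <= success_prob R lab fstar S k.
Proof.
move=> alpha_gt0; have n_gt0 : (0 < n)%N.
  rewrite lt0n; apply: contraTneq alpha_gt0 => n0.
  by rewrite /alpha (_ : n%:R = 0) ?n0 // invr0 mulr0 ltxx.
have draws_gt0 : (0 < #|{: (size S).-tuple (k.-tuple 'I_n)}|)%N.
  by rewrite !card_tuple card_ord !expn_gt0 n_gt0.
have := card_wrong_draws S k; rewrite /success_prob ler_pdivlMr ?ltr0n //.
set good := [set omega | _]; rewrite -(cardsC good) natrD; nra.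
Qed.
End PruneAndLabelRuns.

Lemma mul_expRN_le (R : realType) (s d t : R) :
  0 < s -> 0 < d -> ln (s / d) <= t -> s * expR (- t) <= d.
Proof.
move=> s_gt0 d_gt0 ln_le; apply: le_trans (_ : s * expR (- ln (s / d)) <= d).
  by rewrite ler_pM2l // ler_expR lerN2.
by rewrite expRN lnK ?posrE ?divr_gt0 // invf_div mulrC divfK ?gt_eqF.
Qed.

Lemma size_mul_expR_le (R : realType) (a d : R) (s k : nat) :
  0 < a <= 1 -> 0 < d < 1 -> 4 * a ^- 2 * ln (s%:R / d) <= k%:R ->
  s%:R * expR (- (k%:R * a / 4)) <= d.
Proof.
move=> /andP [a_gt0 a_le1] /andP [d_gt0 d_lt1] k_ge.
have [-> | s_gt0] := posnP s; first by rewrite mul0r ltW.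
apply: mul_expRN_le; rewrite ?ltr0n //.
have ln_ge0 : 0 <= ln (s%:R / d).
  by apply: ln_ge0; rewrite ler_pdivlMr // mul1r (le_trans (ltW d_lt1)) // ler1n.
move: k_ge ln_ge0; rewrite -exprVn; set L := ln _ => k_ge ln_ge0.
have inv_ge1 : 1 <= a^-1 by rewrite invf_ge1.
have ka_ge : 4 * a^-1 * L <= k%:R * a.
  have -> : 4 * a^-1 * L = 4 * a^-1 ^+ 2 * L * a.
    by rewrite expr2 -!mulrA [a^-1 * (L * a)]mulrCA mulVf ?gt_eqF // mulr1.
  by rewrite ler_pM2r.
have : L <= a^-1 * L by rewrite ler_peMl.
lra.
Qed.

Lemma ceiln_ge (R : realType) (x : R) : x <= (ceiln x)%:R.
Proof.
rewrite /ceiln natr_absz ger0_norm ?le_max ?lexx //.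
by apply: le_trans (ceil_ge x) _; rewrite ler_int le_max lexx orbT.
Qed.

Theorem lemma10 (R : realType) :
  exists C : R, 0 < C /\
  forall (X : eqType) (n : nat) (lab : 'I_n -> X -> bool) (fstar : X -> bool)
         (S : seq X) (delta : R),
    0 < alpha R lab fstar -> uniq S -> 0 < delta ->
    let a := alpha R lab fstar in
    let k := ceiln (C * a ^- 2 * ln ((size S)%:R / delta)) in
    1 - delta <= success_prob R lab fstar S k.
Proof.
exists 4; split => // X n lab fstar S delta alpha_gt0 _ delta_gt0.
rewrite [is_true _]/=; set k := ceiln _.
have [delta_ge1 | delta_lt1] := leP 1 delta.
  by apply: le_trans (divr_ge0 (ler0n _ _) (ler0n _ _)); rewrite subr_le0.
apply: le_trans (success_prob_ge S k alpha_gt0); rewrite lerD2l lerN2.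
apply: size_mul_expR_le; rewrite ?alpha_gt0 ?alpha_le1 ?delta_gt0 ?delta_lt1 //.
exact: ceiln_ge.
Qed.
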